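(* Let $x$ be a fixed real (or complex) number and let $\kappa_x:\mathbb{Z}_{>0}\to\mathbb{C}$ be the recursive divisor function defined by $$\kappa_x(n) = n^x + \sum_{d \mid n,\ d<n} \kappa_x(d)\qquad (n\ge 1).$$ Then, as an identity of Dirichlet series in $s$ (in particular for all complex $s$ with real part sufficiently large that both sides converge absolutely), $$\sum_{n=1}^\infty \frac{\kappa_x(n)}{n^s} = \frac{\zeta(s-x)}{2-\zeta(s)},$$ where $\zeta$ is the Riemann zeta function.
   Context: For $n=1$ the sum over $d\mid n$, $d<n$ is empty, so $\kappa_x(1)=1$. $\zeta(s)=\sum_{n\ge1} n^{-s}$. *)

From Stdlib Require Import Reals List Arith.
From Coquelicot Require Import Coquelicot.
Import ListNotations.
Open Scope R_scope.

(* n ^ z for a positive natural n and complex z (principal value):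
   n^z = exp(z ln n) = e^{Re z ln n} (cos(Im z ln n) + i sin(Im z ln n)). *)
Definition cpow_nat (n : nat) (z : C) : C :=
  (exp (Re z * ln (INR n)) * cos (Im z * ln (INR n)),
   exp (Re z * ln (INR n)) * sin (Im z * ln (INR n))).

Definition proper_divisors (n : nat) : list nat :=
  filter (fun d => Nat.eqb (n mod d) 0) (seq 1 (n - 1)).

Definition Csum (l : list C) : C := fold_right Cplus (RtoC 0) l.

(* kappa satisfies the recursion kappa(n) = n^x + sum_{d | n, d < n} kappa(d), n >= 1
   (this determines kappa uniquely on positive integers). *)
Definition is_kappa (x : C) (kappa : nat -> C) : Prop :=
  forall n : nat, (1 <= n)%nat ->
    kappa n = Cplus (cpow_nat n x) (Csum (map kappa (proper_divisors n))).

(* The n-th term (n >= 1, indexed from k = n - 1) of the Dirichlet series sum a(n) n^{-s}. *)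
Definition dir_term (a : nat -> C) (s : C) (k : nat) : C :=
  Cmult (a (S k)) (cpow_nat (S k) (Copp s)).

(* Riemann zeta via its Dirichlet series sum_{n>=1} n^{-s}
   (real and imaginary parts summed separately; meaningful for Re s > 1). *)
Definition zeta (s : C) : C :=
  (Series (fun k => Re (dir_term (fun _ => RtoC 1) s k)),
   Series (fun k => Im (dir_term (fun _ => RtoC 1) s k))).

From Stdlib Require Import Reals List Lia Lra.
From Coquelicot Require Import Coquelicot.
Open Scope R_scope.

(* With f(n) = kappa(n) n^-s, g(n) = n^(x-s) and w(n) = n^-s, multiplying the
   recursion by n^-s gives the renewal equation
     f(n) = g(n) + sum_{d | n, d < n} f(d) w(n/d).
   Summing over n <= N and exchanging the two sums,
     sum_{n<=N} f(n) = sum_{n<=N} g(n) + sum_{d<=N} f(d) W(N/d),  W(M) = sum_{2<=m<=M} w(m).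
   For Re s > |Re x| + 3 we have sum_{m>=2} |w(m)| <= 1/2 and sum_n |g(n)| <= 2, so the
   same identity for absolute values bounds the partial sums of |f| by 4: the Dirichlet
   series of kappa converges absolutely.  Since W(M) -> zeta(s) - 1, the last sum is
   (zeta(s) - 1) sum_{d<=N} f(d) + o(1), and letting N -> oo gives
   F(s) (1 - (zeta(s) - 1)) = zeta(s - x) for F(s) = sum_n f(n). *)

Lemma cpow_nat_add n a b : cpow_nat n (Cplus a b) = Cmult (cpow_nat n a) (cpow_nat n b).
Proof.
  unfold cpow_nat, Cmult; simpl; unfold Re, Im; simpl.
  rewrite !Rmult_plus_distr_r, exp_plus, cos_plus, sin_plus.
  f_equal; ring.
Qed.

Lemma cpow_nat_mul d m z : (0 < d)%nat -> (0 < m)%nat ->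
  cpow_nat (d * m) z = Cmult (cpow_nat d z) (cpow_nat m z).
Proof.
  intros Hd Hm. unfold cpow_nat, Cmult; simpl; unfold Re, Im; simpl.
  rewrite mult_INR, ln_mult by (apply lt_0_INR; lia).
  rewrite !Rmult_plus_distr_l, exp_plus, cos_plus, sin_plus.
  f_equal; ring.
Qed.

Lemma cpow_nat_1 z : cpow_nat 1 z = RtoC 1.
Proof.
  unfold cpow_nat. simpl. rewrite ln_1, !Rmult_0_r, exp_0, cos_0, sin_0.
  unfold RtoC. f_equal; ring.
Qed.

Lemma Cmod_cpow_nat n z : Cmod (cpow_nat n z) = exp (Re z * ln (INR n)).
Proof.
  unfold cpow_nat, Cmod; cbn [fst snd].
  set (E := exp _). set (t := Im z * _).
  replace ((E * cos t) ^ 2 + (E * sin t) ^ 2) with (E ^ 2 * (sin t ^ 2 + cos t ^ 2)) by ring.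
  rewrite <- !Rsqr_pow2, sin2_cos2, Rmult_1_r.
  apply sqrt_Rsqr. left; apply exp_pos.
Qed.

Lemma Cmod_cpow_nat_le n z k : (1 <= n)%nat -> Re z <= - INR k ->
  Cmod (cpow_nat n z) <= / INR n ^ k.
Proof.
  intros Hn Hz. rewrite Cmod_cpow_nat.
  assert (Hpos : 0 < INR n) by (apply lt_0_INR; lia).
  assert (Hln : 0 <= ln (INR n)) by (rewrite <- ln_1; apply ln_le; [lra | apply (le_INR 1); lia]).
  replace (/ INR n ^ k) with (exp (- (INR k * ln (INR n))))
    by (rewrite exp_Ropp, <- ln_pow, exp_ln by (try apply pow_lt; lra); reflexivity).
  destruct (Rle_lt_or_eq_dec (Re z * ln (INR n)) (- (INR k * ln (INR n)))) as [h | h].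
  - nra.
  - left. apply exp_increasing, h.
  - rewrite h. lra.
Qed.

Lemma sum_n_m_le_loc (a b : nat -> R) n m :
  (forall k, (n <= k <= m)%nat -> a k <= b k) -> sum_n_m a n m <= sum_n_m b n m.
Proof.
  intros Hab.
  rewrite (sum_n_m_ext_loc a (fun k => Rmin (a k) (b k)))
    by (intros k Hk; rewrite Rmin_left; auto).
  apply sum_n_m_le. intros k. apply Rmin_r.
Qed.

Lemma sum_n_m_R_zero (a : nat -> R) n m : (m < n)%nat -> sum_n_m a n m = 0.
Proof. exact (sum_n_m_zero (G := R_AbelianMonoid) a n m). Qed.

Lemma sum_inv_sq_le_1 M : sum_n_m (fun m => / INR m ^ 2) 2 M <= 1.
Proof.
  assert (Htel : forall K, sum_n_m (fun m => / INR m ^ 2) 2 (S K) <= 1 - / INR (S K)).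
  { intros K; induction K as [|K IH].
    - rewrite sum_n_m_R_zero by lia. simpl. lra.
    - rewrite (sum_n_Sm (G := R_AbelianMonoid)) by lia. change (plus ?a ?b) with (a + b).
      rewrite !S_INR in *. pose proof (pos_INR K).
      assert (/ (INR K + 1 + 1) ^ 2 <= / (INR K + 1) - / (INR K + 1 + 1)).
      { apply Rminus_le_0. field_simplify; [|lra..].
        apply Rmult_le_pos; [lra|]. left. apply Rinv_0_lt_compat. nra. }
      lra. }
  destruct M as [|M].
  - rewrite sum_n_m_R_zero by lia. simpl. lra.
  - pose proof (Htel M). assert (0 < / INR (S M)) by (apply Rinv_0_lt_compat, lt_0_INR; lia). lra.
Qed.

Lemma sum_inv_sq_le_2 N : sum_n_m (fun m => / INR m ^ 2) 1 N <= 2.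
Proof.
  destruct N as [|N].
  - rewrite sum_n_m_R_zero by lia. simpl. lra.
  - rewrite (sum_Sn_m (G := R_AbelianMonoid)) by lia. change (plus ?a ?b) with (a + b).
    pose proof (sum_inv_sq_le_1 (S N)). simpl INR at 1. lra.
Qed.

Lemma sum_Cmod_cpow_nat_le_2 z N : Re z <= -2 ->
  sum_n_m (fun n => Cmod (cpow_nat n z)) 1 N <= 2.
Proof.
  intros Hz. eapply Rle_trans; [|apply (sum_inv_sq_le_2 N)].
  apply sum_n_m_le_loc. intros n Hn. apply Cmod_cpow_nat_le; [lia | simpl; lra].
Qed.

Lemma sum_Cmod_cpow_nat_le_half z M : Re z <= -3 ->
  sum_n_m (fun m => Cmod (cpow_nat m z)) 2 M <= / 2.
Proof.
  intros Hz. apply Rle_trans with (sum_n_m (fun m => / 2 * / INR m ^ 2) 2 M).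
  - apply sum_n_m_le_loc. intros m Hm.
    assert (Hm2 : 2 <= INR m) by (apply (le_INR 2); lia).
    eapply Rle_trans; [apply Cmod_cpow_nat_le with (k := 3%nat); [lia | simpl; lra]|].
    rewrite <- Rinv_mult. apply Rinv_le_contravar; [nra | simpl; nra].
  - rewrite (sum_n_m_mult_l (K := R_Ring)). change (mult (/ 2) ?a) with (/ 2 * a).
    eapply Rle_trans; [apply Rmult_le_compat_l; [lra | apply (sum_inv_sq_le_1 M)] | lra].
Qed.

Lemma Cminus_0_r z : Cminus z (RtoC 0) = z.
Proof. ring. Qed.

Lemma Cminus_2_l z : Cminus (RtoC 2) z = Cminus (RtoC 1) (Cminus z (RtoC 1)).
Proof.
  replace (RtoC 2) with (Cplus (RtoC 1) (RtoC 1)) by (rewrite <- RtoC_plus; f_equal; ring).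
  ring.
Qed.

Lemma Cmod_sum_n_m_le (a : nat -> C) n m :
  Cmod (sum_n_m a n m) <= sum_n_m (fun k => Cmod (a k)) n m.
Proof. exact (norm_sum_n_m (V := C_NormedModule) a n m). Qed.

Definition Cseq_cv (u : nat -> C) (l : C) : Prop :=
  forall eps, 0 < eps -> exists N, forall n, (N <= n)%nat -> Cmod (Cminus (u n) l) < eps.

Lemma Cseq_cv_ext u v l : (forall n, u n = v n) -> Cseq_cv u l -> Cseq_cv v l.
Proof.
  intros Huv Hu eps Heps. destruct (Hu eps Heps) as [N HN].
  exists N. intros n Hn. rewrite <- Huv. auto.
Qed.

Lemma Cseq_cv_plus u v a b :
  Cseq_cv u a -> Cseq_cv v b -> Cseq_cv (fun n => Cplus (u n) (v n)) (Cplus a b).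
Proof.
  intros Hu Hv eps Heps.
  destruct (Hu (eps / 2)) as [N1 HN1]; [lra|].
  destruct (Hv (eps / 2)) as [N2 HN2]; [lra|].
  exists (max N1 N2). intros n Hn.
  replace (Cminus (Cplus (u n) (v n)) (Cplus a b))
    with (Cplus (Cminus (u n) a) (Cminus (v n) b)) by ring.
  eapply Rle_lt_trans; [apply Cmod_triangle|].
  specialize (HN1 n ltac:(lia)). specialize (HN2 n ltac:(lia)). lra.
Qed.

Lemma Cseq_cv_mult_r u a c : Cseq_cv u a -> Cseq_cv (fun n => Cmult (u n) c) (Cmult a c).
Proof.
  intros Hu eps Heps. pose proof (Cmod_ge_0 c) as Hc.
  destruct (Hu (eps / (Cmod c + 1))) as [N HN].
  { apply Rdiv_lt_0_compat; lra. }
  exists N. intros n Hn.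
  replace (Cminus (Cmult (u n) c) (Cmult a c)) with (Cmult (Cminus (u n) a) c) by ring.
  rewrite Cmod_mult. specialize (HN n Hn).
  apply Rle_lt_trans with (eps / (Cmod c + 1) * Cmod c).
  - apply Rmult_le_compat_r; lra.
  - apply Rmult_lt_reg_r with (Cmod c + 1); [lra|].
    field_simplify; [nra | lra].
Qed.

Lemma Cmod_limit_le u l c : Cseq_cv u l -> (forall n, Cmod (u n) <= c) -> Cmod l <= c.
Proof.
  intros Hu Hc. destruct (Rle_or_lt (Cmod l) c) as [Hle | Hlt]; auto.
  destruct (Hu (Cmod l - c)) as [N HN]; [lra|].
  specialize (HN N (le_n N)). specialize (Hc N).
  assert (Cmod l <= Cmod (u N) + Cmod (Cminus (u N) l)).
  { rewrite <- Cmod_opp with (x := Cminus (u N) l).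
    replace l with (Cplus (u N) (Copp (Cminus (u N) l))) at 1 by ring.
    apply Cmod_triangle. }
  lra.
Qed.

Lemma Cseq_cv_sum_from_2 (w : nat -> C) Z :
  Cseq_cv (sum_n_m w 1) Z -> Cseq_cv (sum_n_m w 2) (Cminus Z (w 1%nat)).
Proof.
  intros Hw eps Heps. destruct (Hw eps Heps) as [N HN].
  exists (max N 1). intros n Hn.
  replace (Cminus (sum_n_m w 2 n) (Cminus Z (w 1%nat))) with (Cminus (sum_n_m w 1 n) Z).
  - apply HN. lia.
  - rewrite sum_Sn_m by lia. change (plus ?a ?b) with (Cplus a b). ring.
Qed.

Lemma is_series_shift_iff (a : nat -> C) L :
  is_series (fun k => a (S k)) L <-> Cseq_cv (sum_n_m a 1) L.
Proof.
  split.
  - intros H eps Heps.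
    destruct (proj1 (filterlim_locally_ball_norm (K := C_AbsRing) _ _) H (mkposreal eps Heps))
      as [N HN].
    exists (S N). intros [|n] Hn; [lia|].
    specialize (HN n ltac:(lia)). unfold ball_norm, sum_n in HN.
    rewrite sum_n_m_S in HN. exact HN.
  - intros H. apply (filterlim_locally_ball_norm (K := C_AbsRing)). intros eps.
    destruct (H eps (cond_pos eps)) as [N HN].
    exists N. intros n Hn. unfold ball_norm, sum_n.
    rewrite sum_n_m_S. apply HN. lia.
Qed.

Lemma ex_series_shift_nonneg_bounded (c : nat -> R) A :
  (forall k, 0 <= c k) -> (forall N, sum_n_m c 1 N <= A) -> ex_series (fun k => c (S k)).
Proof.
  intros Hc HA.
  destruct (ex_finite_lim_seq_incr (sum_n (fun k => c (S k))) A) as [l Hl].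
  - intros n. rewrite sum_Sn. change (plus ?a ?b) with (a + b).
    pose proof (Hc (S (S n))). lra.
  - intros n. unfold sum_n. rewrite sum_n_m_S. apply HA.
  - exists l. exact Hl.
Qed.

Lemma Re_sum_n (a : nat -> C) N : Re (sum_n a N) = sum_n (fun k => Re (a k)) N.
Proof.
  induction N as [|N IH]; [now rewrite !sum_O|].
  rewrite !sum_Sn, <- IH. reflexivity.
Qed.

Lemma Im_sum_n (a : nat -> C) N : Im (sum_n a N) = sum_n (fun k => Im (a k)) N.
Proof.
  induction N as [|N IH]; [now rewrite !sum_O|].
  rewrite !sum_Sn, <- IH. reflexivity.
Qed.

Lemma is_series_Re (a : nat -> C) L : is_series a L -> is_series (fun k => Re (a k)) (Re L).
Proof.
  intros H. apply (filterlim_locally_ball_norm (K := R_AbsRing)). intros eps.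
  destruct (proj1 (filterlim_locally_ball_norm (K := C_AbsRing) _ _) H eps) as [N HN].
  exists N. intros n Hn.
  specialize (HN n Hn). unfold ball_norm in *. rewrite <- Re_sum_n.
  eapply Rle_lt_trans; [|exact HN]. apply (re_le_Cmod (Cminus (sum_n a n) L)).
Qed.

Lemma is_series_Im (a : nat -> C) L : is_series a L -> is_series (fun k => Im (a k)) (Im L).
Proof.
  intros H. apply (filterlim_locally_ball_norm (K := R_AbsRing)). intros eps.
  destruct (proj1 (filterlim_locally_ball_norm (K := C_AbsRing) _ _) H eps) as [N HN].
  exists N. intros n Hn.
  specialize (HN n Hn). unfold ball_norm in *. rewrite <- Im_sum_n.
  eapply Rle_lt_trans; [|exact HN].
  eapply Rle_trans; [apply Rmax_r | apply (Rmax_Cmod (Cminus (sum_n a n) L))].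
Qed.

Lemma zeta_partial_sums_cv s : 2 <= Re s ->
  Cseq_cv (sum_n_m (fun n => cpow_nat n (Copp s)) 1) (zeta s).
Proof.
  intros Hs.
  set (w := fun n => cpow_nat n (Copp s)).
  assert (Hterm : forall k, dir_term (fun _ => RtoC 1) s k = w (S k))
    by (intros k; apply Cmult_1_l).
  assert (Habs : ex_series (fun k => Cmod (w (S k)))).
  { apply (ex_series_shift_nonneg_bounded (fun n => Cmod (w n)) 2); [intros; apply Cmod_ge_0|].
    intros N. apply sum_Cmod_cpow_nat_le_2. change (Re (Copp s)) with (- Re s); lra. }
  destruct (ex_series_le (K := C_AbsRing) (V := C_CompleteNormedModule)
              (fun k => w (S k)) _ (fun k => Rle_refl _) Habs) as [L HL].
  replace (zeta s) with L.
  - apply is_series_shift_iff. exact HL.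
  - unfold zeta.
    rewrite (Series_ext (fun k => Re (dir_term _ s k)) (fun k => Re (w (S k)))),
      (Series_ext (fun k => Im (dir_term _ s k)) (fun k => Im (w (S k))))
      by (intros; rewrite Hterm; reflexivity).
    rewrite (is_series_unique _ _ (is_series_Re _ _ HL)),
      (is_series_unique _ _ (is_series_Im _ _ HL)).
    destruct L; reflexivity.
Qed.

Lemma mult_div_lt_half A eps : 0 <= A -> 0 < eps -> A * (eps / (2 * (A + 1))) < eps / 2.
Proof.
  intros HA Heps. apply Rmult_lt_reg_r with (2 * (A + 1)); [lra|]. field_simplify; nra.
Qed.

Lemma Cseq_cv_sum_div_0 (a E : nat -> C) A c :
  (forall N, sum_n_m (fun d => Cmod (a d)) 1 N <= A) ->
  (forall M, Cmod (E M) <= c) -> Cseq_cv E (RtoC 0) ->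
  Cseq_cv (fun N => sum_n_m (fun d => Cmult (a d) (E (N / d)%nat)) 1 N) (RtoC 0).
Proof.
  intros HA Hc HE eps Heps.
  set (b := fun d => Cmod (a d)).
  assert (HA0 : 0 <= A).
  { specialize (HA 0%nat). rewrite sum_n_m_R_zero in HA by lia. exact HA. }
  assert (Hc0 : 0 <= c) by (eapply Rle_trans; [apply Cmod_ge_0 | apply (Hc 0%nat)]).
  destruct (HE (eps / (2 * (A + 1)))) as [M0 HM0].
  { apply Rdiv_lt_0_compat; lra. }
  assert (Htail : ex_series (fun k => b (S k)))
    by (apply (ex_series_shift_nonneg_bounded b A); [intros; apply Cmod_ge_0 | exact HA]).
  assert (Heps2 : 0 < eps / (2 * (c + 1))) by (apply Rdiv_lt_0_compat; lra).
  destruct (Cauchy_ex_series _ Htail (mkposreal _ Heps2)) as [D HD].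
  (* For d <= D the index N / d is at least M0, so E (N / d) is small; the terms
     with d > D are controlled by the tail of sum |a|. *)
  exists (S D * S M0)%nat. intros N HN.
  rewrite Cminus_0_r.
  eapply Rle_lt_trans; [apply Cmod_sum_n_m_le|].
  rewrite (sum_n_m_Chasles _ 1 D N) by nia. change (plus ?x ?y) with (x + y).
  assert (Hhead : sum_n_m (fun d => Cmod (Cmult (a d) (E (N / d)%nat))) 1 D
                  <= A * (eps / (2 * (A + 1)))).
  { eapply Rle_trans.
    - apply (sum_n_m_le_loc _ (fun d => b d * (eps / (2 * (A + 1))))).
      intros d Hd. rewrite Cmod_mult. apply Rmult_le_compat_l; [apply Cmod_ge_0|].
      left. rewrite <- (Cminus_0_r (E _)). apply HM0.
      apply Nat.div_le_lower_bound; nia.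
    - rewrite (sum_n_m_mult_r (K := R_Ring)). apply Rmult_le_compat_r; [|apply HA].
      apply Rlt_le, Rdiv_lt_0_compat; lra. }
  assert (Hrest : sum_n_m (fun d => Cmod (Cmult (a d) (E (N / d)%nat))) (S D) N
                  <= c * (eps / (2 * (c + 1)))).
  { eapply Rle_trans.
    - apply (sum_n_m_le_loc _ (fun d => c * b d)).
      intros d Hd. rewrite Cmod_mult, (Rmult_comm c).
      apply Rmult_le_compat_l; [apply Cmod_ge_0 | apply Hc].
    - rewrite (sum_n_m_mult_l (K := R_Ring)). apply Rmult_le_compat_l; [exact Hc0|].
      destruct N as [|N]; [nia|].
      rewrite <- sum_n_m_S. left. eapply Rle_lt_trans; [apply Rle_abs | apply HD; nia]. }
  pose proof (mult_div_lt_half A eps HA0 Heps).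
  pose proof (mult_div_lt_half c eps Hc0 Heps).
  lra.
Qed.

Definition proper_divisor_sum {G : AbelianMonoid} (F : nat -> G) (n : nat) : G :=
  sum_n_m (fun d => if Nat.eqb (n mod d) 0 then F d else zero) 1 (n - 1).

Lemma Csum_app l1 l2 : Csum (l1 ++ l2) = Cplus (Csum l1) (Csum l2).
Proof.
  induction l1 as [|z l1 IH]; simpl.
  - ring.
  - rewrite IH. ring.
Qed.

Lemma Csum_proper_divisors (h : nat -> C) n :
  Csum (map h (proper_divisors n)) = proper_divisor_sum h n.
Proof.
  unfold proper_divisors, proper_divisor_sum. generalize (n - 1)%nat as k.
  induction k as [|k IH].
  - rewrite sum_n_m_zero by lia. reflexivity.
  - rewrite seq_S, filter_app, map_app, Csum_app, IH, sum_n_Sm by lia.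
    cbn [filter]. change (1 + k)%nat with (S k).
    destruct (Nat.eqb (n mod S k) 0); unfold Csum; cbn [map fold_right].
    + now rewrite Cplus_0_r.
    + rewrite Cplus_0_r. symmetry. apply plus_zero_r.
Qed.

Lemma Cmod_proper_divisor_sum_le (h : nat -> C) n :
  Cmod (proper_divisor_sum h n) <= proper_divisor_sum (fun d => Cmod (h d)) n.
Proof.
  eapply Rle_trans; [apply Cmod_sum_n_m_le|]. apply sum_n_m_le. intros d.
  destruct (Nat.eqb (n mod d) 0); [apply Rle_refl | apply Req_le, Cmod_0].
Qed.

Lemma proper_divisor_sum_mult_r (h : nat -> C) c n :
  Cmult (proper_divisor_sum h n) c = proper_divisor_sum (fun d => Cmult (h d) c) n.
Proof.
  unfold proper_divisor_sum. rewrite <- (sum_n_m_mult_r (K := C_Ring)).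
  apply sum_n_m_ext. intros d. destruct (Nat.eqb (n mod d) 0); [reflexivity|].
  apply Cmult_0_l.
Qed.

Lemma sum_n_m_multiples_succ {G : AbelianMonoid} (H : nat -> G) N d : (1 <= d <= N)%nat ->
  sum_n_m (fun m => H (d * m)%nat) 2 (S N / d)
  = plus (sum_n_m (fun m => H (d * m)%nat) 2 (N / d))
         (if Nat.eqb (S N mod d) 0 then H (S N) else zero).
Proof.
  intros Hd.
  pose proof (Nat.div_mod_eq (S N) d) as HSN. pose proof (Nat.div_mod_eq N d) as HN.
  pose proof (Nat.mod_bound_pos (S N) d ltac:(lia) ltac:(lia)).
  pose proof (Nat.mod_bound_pos N d ltac:(lia) ltac:(lia)).
  destruct (Nat.eqb_spec (S N mod d) 0) as [Hdvd | Hndvd].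
  - assert (Hq : (S N / d = S (N / d))%nat) by nia.
    rewrite Hq, sum_n_Sm by nia. do 2 f_equal. nia.
  - replace (S N / d)%nat with (N / d)%nat by nia. symmetry. apply plus_zero_r.
Qed.

Lemma sum_proper_divisor_sum_swap {G : AbelianMonoid} (F : nat -> nat -> G) N :
  sum_n_m (fun n => proper_divisor_sum (fun d => F d n) n) 1 N
  = sum_n_m (fun d => sum_n_m (fun m => F d (d * m)%nat) 2 (N / d)) 1 N.
Proof.
  induction N as [|N IH].
  - rewrite !sum_n_m_zero by lia. reflexivity.
  - rewrite !sum_n_Sm by lia. rewrite IH.
    rewrite (sum_n_m_ext_loc (fun d => sum_n_m (fun m => F d (d * m)%nat) 2 (S N / d))
      (fun d => plus (sum_n_m (fun m => F d (d * m)%nat) 2 (N / d))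
       (if Nat.eqb (S N mod d) 0 then F d (S N) else zero)))
      by (intros d Hd; apply (sum_n_m_multiples_succ (F d)); lia).
    rewrite sum_n_m_plus, Nat.div_same, (sum_n_m_zero _ 2 1), plus_zero_r by lia.
    f_equal. unfold proper_divisor_sum.
    now replace (S N - 1)%nat with N by lia.
Qed.

Section Renewal.

Variables (f g w : nat -> C) (Lg Lw : C) (Gb : R).

Hypothesis f_rec : forall n, (1 <= n)%nat ->
  f n = Cplus (g n) (proper_divisor_sum (fun d => Cmult (f d) (w (n / d)%nat)) n).
Hypothesis g_abs_bounded : forall N, sum_n_m (fun n => Cmod (g n)) 1 N <= Gb.
Hypothesis w_abs_small : forall M, sum_n_m (fun m => Cmod (w m)) 2 M <= / 2.
Hypothesis g_cv : Cseq_cv (sum_n_m g 1) Lg.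
Hypothesis w_cv : Cseq_cv (sum_n_m w 2) Lw.

Lemma renewal_partial_sum N :
  sum_n_m f 1 N
  = Cplus (sum_n_m g 1 N) (sum_n_m (fun d => Cmult (f d) (sum_n_m w 2 (N / d))) 1 N).
Proof.
  rewrite (sum_n_m_ext_loc f (fun n => plus (g n)
             (proper_divisor_sum (fun d => Cmult (f d) (w (n / d)%nat)) n)))
    by (intros n Hn; apply f_rec; lia).
  rewrite sum_n_m_plus, (sum_proper_divisor_sum_swap (fun d n => Cmult (f d) (w (n / d)%nat))).
  apply (f_equal2 Cplus); [reflexivity|]. apply sum_n_m_ext_loc. intros d Hd.
  rewrite <- (sum_n_m_mult_l (K := C_Ring)). apply sum_n_m_ext. intros m.
  rewrite Nat.mul_comm, Nat.div_mul by lia. reflexivity.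
Qed.

Lemma renewal_abs_partial_sum_le N :
  sum_n_m (fun n => Cmod (f n)) 1 N <= Gb + / 2 * sum_n_m (fun n => Cmod (f n)) 1 N.
Proof.
  eapply Rle_trans.
  { apply (sum_n_m_le_loc _ (fun n => Cmod (g n)
       + proper_divisor_sum (fun d => Cmod (f d) * Cmod (w (n / d)%nat)) n)).
    intros n Hn. rewrite (f_rec n) by lia.
    eapply Rle_trans; [apply Cmod_triangle|]. apply Rplus_le_compat_l.
    eapply Rle_trans; [apply Cmod_proper_divisor_sum_le|].
    right. unfold proper_divisor_sum. apply sum_n_m_ext. intros d.
    destruct (Nat.eqb (n mod d) 0); [apply Cmod_mult | reflexivity]. }
  change (Cmod (g ?n) + ?p) with (plus (Cmod (g n)) p).
  rewrite sum_n_m_plus,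
    (sum_proper_divisor_sum_swap (fun d n => Cmod (f d) * Cmod (w (n / d)%nat))).
  apply Rplus_le_compat; [apply g_abs_bounded|].
  rewrite Rmult_comm, <- (sum_n_m_mult_r (K := R_Ring)).
  apply sum_n_m_le_loc. intros d Hd.
  rewrite (sum_n_m_ext _ (fun m => mult (Cmod (f d)) (Cmod (w m)))).
  - rewrite (sum_n_m_mult_l (K := R_Ring)).
    apply Rmult_le_compat_l; [apply Cmod_ge_0 | apply w_abs_small].
  - intros m. rewrite Nat.mul_comm, Nat.div_mul by lia. reflexivity.
Qed.

Lemma renewal_abs_partial_sum_bounded N : sum_n_m (fun n => Cmod (f n)) 1 N <= 2 * Gb.
Proof. pose proof (renewal_abs_partial_sum_le N). lra. Qed.

Lemma renewal_ex_series_abs : ex_series (fun k => Cmod (f (S k))).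
Proof.
  apply (ex_series_shift_nonneg_bounded (fun n => Cmod (f n)) (2 * Gb)).
  - intros; apply Cmod_ge_0.
  - exact renewal_abs_partial_sum_bounded.
Qed.

Lemma renewal_Cmod_Lw : Cmod Lw <= / 2.
Proof.
  apply (Cmod_limit_le _ _ _ w_cv). intros M.
  eapply Rle_trans; [apply Cmod_sum_n_m_le | apply w_abs_small].
Qed.

Lemma renewal_denominator_neq_0 : Cminus (RtoC 1) Lw <> RtoC 0.
Proof.
  intros H. pose proof renewal_Cmod_Lw as HLw.
  replace Lw with (RtoC 1) in HLw
    by (symmetry; apply Ceq_minus in H; rewrite <- H at 1; ring).
  rewrite Cmod_1 in HLw. lra.
Qed.

Lemma renewal_partial_sum_mult N :
  Cmult (sum_n_m f 1 N) (Cminus (RtoC 1) Lw)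
  = Cplus (sum_n_m g 1 N)
      (sum_n_m (fun d => Cmult (f d) (Cminus (sum_n_m w 2 (N / d)) Lw)) 1 N).
Proof.
  assert (Hsplit : sum_n_m (fun d => Cmult (f d) (sum_n_m w 2 (N / d))) 1 N
    = Cplus (Cmult (sum_n_m f 1 N) Lw)
        (sum_n_m (fun d => Cmult (f d) (Cminus (sum_n_m w 2 (N / d)) Lw)) 1 N)).
  { rewrite <- (sum_n_m_mult_r (K := C_Ring)).
    change (Cplus ?a ?b) with (plus a b). rewrite <- sum_n_m_plus.
    apply sum_n_m_ext. intros d.
    change (Cmult (f d) (sum_n_m w 2 (N / d)%nat)
            = Cplus (Cmult (f d) Lw) (Cmult (f d) (Cminus (sum_n_m w 2 (N / d)%nat) Lw))).
    ring. }
  transitivity (Cminus (sum_n_m f 1 N) (Cmult (sum_n_m f 1 N) Lw)); [ring|].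
  rewrite renewal_partial_sum at 1. rewrite Hsplit. ring.
Qed.

Lemma renewal_series_cv : Cseq_cv (sum_n_m f 1) (Cdiv Lg (Cminus (RtoC 1) Lw)).
Proof.
  set (E := fun M => Cminus (sum_n_m w 2 M) Lw).
  assert (HE : Cseq_cv (fun N => sum_n_m (fun d => Cmult (f d) (E (N / d)%nat)) 1 N) (RtoC 0)).
  { apply (Cseq_cv_sum_div_0 f E (2 * Gb) 1 renewal_abs_partial_sum_bounded).
    - intros M. unfold E, Cminus. eapply Rle_trans; [apply Cmod_triangle|].
      rewrite Cmod_opp. pose proof (Cmod_sum_n_m_le w 2 M).
      pose proof (w_abs_small M). pose proof renewal_Cmod_Lw. lra.
    - intros eps Heps. destruct (w_cv eps Heps) as [M HM]. exists M. intros n Hn.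
      unfold E. rewrite Cminus_0_r. auto. }
  apply (Cseq_cv_ext (fun N => Cmult (Cplus (sum_n_m g 1 N)
           (sum_n_m (fun d => Cmult (f d) (E (N / d)%nat)) 1 N)) (Cinv (Cminus (RtoC 1) Lw)))).
  { intros N. unfold E. rewrite <- renewal_partial_sum_mult.
    field. exact renewal_denominator_neq_0. }
  replace (Cdiv Lg (Cminus (RtoC 1) Lw))
    with (Cmult (Cplus Lg (RtoC 0)) (Cinv (Cminus (RtoC 1) Lw))) by (unfold Cdiv; ring).
  apply Cseq_cv_mult_r, Cseq_cv_plus; assumption.
Qed.

End Renewal.

Lemma kappa_dirichlet_recursion x kappa s : is_kappa x kappa ->
  forall n, (1 <= n)%nat ->
  Cmult (kappa n) (cpow_nat n (Copp s))
  = Cplus (cpow_nat n (Copp (Cminus s x)))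
      (proper_divisor_sum (fun d => Cmult (Cmult (kappa d) (cpow_nat d (Copp s)))
                                          (cpow_nat (n / d) (Copp s))) n).
Proof.
  intros Hk n Hn.
  rewrite Hk, Csum_proper_divisors, Cmult_plus_distr_r, proper_divisor_sum_mult_r by exact Hn.
  f_equal.
  - replace (Copp (Cminus s x)) with (Cplus x (Copp s)) by ring.
    symmetry. apply cpow_nat_add.
  - unfold proper_divisor_sum. apply sum_n_m_ext_loc. intros d Hd.
    destruct (Nat.eqb_spec (n mod d) 0) as [Hdvd | _]; [|reflexivity].
    assert (Hn_eq : n = (d * (n / d))%nat) by (pose proof (Nat.div_mod_eq n d); lia).
    rewrite Hn_eq at 1. rewrite cpow_nat_mul by nia. apply Cmult_assoc.
Qed.

Theorem theorem1 (x : C) (kappa : nat -> C) :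
  is_kappa x kappa ->
  exists sigma0 : R, forall s : C, sigma0 < Re s ->
    ex_series (fun k => Cmod (dir_term kappa s k)) /\
    Cminus (RtoC 2) (zeta s) <> RtoC 0 /\
    is_series (dir_term kappa s)
      (Cdiv (zeta (Cminus s x)) (Cminus (RtoC 2) (zeta s))).
Proof.
  intros Hk. exists (Rabs (Re x) + 3). intros s Hs.
  pose proof (Rle_abs (Re x)). pose proof (Rabs_pos (Re x)).
  set (w := fun n => cpow_nat n (Copp s)).
  set (g := fun n => cpow_nat n (Copp (Cminus s x))).
  set (f := fun n => Cmult (kappa n) (w n)).
  pose proof (kappa_dirichlet_recursion x kappa s Hk) as Hrec.
  assert (Hg_abs : forall N, sum_n_m (fun n => Cmod (g n)) 1 N <= 2).
  { intros N. apply sum_Cmod_cpow_nat_le_2.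
    change (Re (Copp (Cminus s x))) with (- (Re s + - Re x)). lra. }
  assert (Hw_abs : forall M, sum_n_m (fun m => Cmod (w m)) 2 M <= / 2).
  { intros M. apply sum_Cmod_cpow_nat_le_half. change (Re (Copp s)) with (- Re s). lra. }
  assert (Hw_cv : Cseq_cv (sum_n_m w 2) (Cminus (zeta s) (RtoC 1))).
  { rewrite <- (cpow_nat_1 (Copp s)). apply Cseq_cv_sum_from_2, zeta_partial_sums_cv. lra. }
  assert (Hg_cv : Cseq_cv (sum_n_m g 1) (zeta (Cminus s x))).
  { apply zeta_partial_sums_cv. change (Re (Cminus s x)) with (Re s + - Re x). lra. }
  rewrite Cminus_2_l. split; [|split].
  - exact (renewal_ex_series_abs f g w 2 Hrec Hg_abs Hw_abs).
  - exact (renewal_denominator_neq_0 w _ Hw_abs Hw_cv).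
  - apply (is_series_shift_iff f).
    exact (renewal_series_cv f g w _ _ 2 Hrec Hg_abs Hw_abs Hg_cv Hw_cv).
Qed.
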